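(* Let $R$ be a commutative ring with unity. Every element of $X(R)$ can be written as $\sum_{n=0}^\infty V^n\langle a_n\rangle$ for some $a_n\in R$ (the series converging in the product topology of $R^{\mathbb N_0}$).
   Context: Fix a prime $p$. $R^{\mathbb N_0}$ has the product topology; $V(r_0,r_1,\dots)=p(0,r_0,r_1,\dots)$; $\langle r\rangle=(r,r^p,r^{p^2},\dots)$; $X(R)$ is the closed subgroup of $R^{\mathbb N_0}$ generated by $\{V^n\langle r\rangle\mid n\in\mathbb N_0,r\in R\}$. *)

(* Sequences in R^{N_0} are functions nat -> R; R carries the
   discrete topology and R^{N_0} the product topology, which we unfold
   explicitly. *)
From mathcomp Require Import all_boot all_order all_algebra.
Set Implicit Arguments. Unset Strict Implicit. Unset Printing Implicit Defensive.
Import GRing.Theory.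
Local Open Scope ring_scope.

Section WittX.
Variables (p : nat) (R : comPzRingType).

Definition Vop (r : nat -> R) : nat -> R :=
  fun i => if i is j.+1 then p%:R * r j else 0.

Definition teich (r : R) : nat -> R := fun i => r ^+ (p ^ i)%N.

(* closed sets of R^{N_0} in the product topology (R discrete):
   S contains every point of its closure. *)
Definition prod_closed (S : (nat -> R) -> Prop) : Prop :=
  forall x : nat -> R,
    (forall N : nat, exists2 s, S s & forall i, (i < N)%N -> s i = x i) -> S x.

Definition add_subgroup (S : (nat -> R) -> Prop) : Prop :=
  S (fun _ => 0) /\ forall x y, S x -> S y -> S (fun i => x i - y i).

(* X(R): the closed subgroup generated by { V^n <r> }, i.e. the intersection
   of all closed subgroups containing these elements. *)
Definition X (x : nat -> R) : Prop :=
  forall S : (nat -> R) -> Prop,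
    add_subgroup S -> prod_closed S ->
    (forall (n : nat) (r : R), S (iter n Vop (teich r))) -> S x.

Definition prod_cvg (u : nat -> nat -> R) (x : nat -> R) : Prop :=
  forall i : nat, exists N0 : nat, forall N, (N0 <= N)%N -> u N i = x i.

Definition series_to (f : nat -> nat -> R) (x : nat -> R) : Prop :=
  prod_cvg (fun N i => \sum_(n < N) f n i) x.

End WittX.

From HB Require Import structures.
From mathcomp Require Import all_boot all_order all_algebra.
From mathcomp Require Import mpoly ring.
From Stdlib Require Import ClassicalEpsilon.
Set Implicit Arguments. Unset Strict Implicit. Unset Printing Implicit Defensive.
Import GRing.Theory.
Local Open Scope ring_scope.

(* The i-th coordinate of sum_n V^n<a_n> is the ghost component
   w_i(a) = sum_(n <= i) p^n a_n^(p^(i-n)), so it suffices to show that the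
   image of the ghost map contains X(R), i.e. that it is a closed subgroup
   containing every V^n<r>.  It is closed because w_0(a), ..., w_(N-1)(a)
   determine the products p^n a_n for n < N, and w_i(a) only depends on these.
   It is closed under subtraction by universality: in Z[X_n, Y_n] the
   Frobenius lift X_n |-> X_n^p satisfies Dwork's congruences, so w(X) - w(Y)
   is a ghost vector up to any length, and one specializes X, Y to a, b. *)

Section PowerDivisibility.
Variables (A : comPzRingType) (p : nat).
Implicit Types f g : A.

Definition pdvd (k : nat) f : Prop := exists h, f = p%:R ^+ k * h.

Lemma pdvd0 k : pdvd k 0.
Proof. by exists 0; rewrite mulr0. Qed.

Lemma pdvdD k f g : pdvd k f -> pdvd k g -> pdvd k (f + g).
Proof. by move=> [h ->] [h' ->]; exists (h + h'); rewrite mulrDr. Qed.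

Lemma pdvdN k f : pdvd k f -> pdvd k (- f).
Proof. by move=> [h ->]; exists (- h); rewrite mulrN. Qed.

Lemma pdvdB k f g : pdvd k f -> pdvd k g -> pdvd k (f - g).
Proof. by move=> df dg; apply/pdvdD/pdvdN. Qed.

Lemma pdvdMl k f g : pdvd k f -> pdvd k (g * f).
Proof. by move=> [h ->]; exists (g * h); rewrite mulrCA. Qed.

Lemma pdvdMr k f g : pdvd k f -> pdvd k (f * g).
Proof. by rewrite mulrC; apply: pdvdMl. Qed.

Lemma pdvdM j k f g : pdvd j f -> pdvd k g -> pdvd (j + k) (f * g).
Proof. by move=> [h ->] [h' ->]; exists (h * h'); rewrite exprD mulrACA. Qed.

Lemma pdvd_mulXn j k f : pdvd k f -> pdvd (j + k) (p%:R ^+ j * f).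
Proof. by apply: pdvdM; exists 1; rewrite mulr1. Qed.

Lemma pdvdW j k f : (j <= k)%N -> pdvd k f -> pdvd j f.
Proof.
by move=> le_jk [h ->]; exists (p%:R ^+ (k - j) * h); rewrite mulrA -exprD subnKC.
Qed.

Lemma pdvd_sum k m (F : 'I_m -> A) :
  (forall i, pdvd k (F i)) -> pdvd k (\sum_(i < m) F i).
Proof. by move=> dF; elim/big_ind: _ => //; [apply: pdvd0 | apply: pdvdD]. Qed.

Lemma pdvd_subXX k m f g : pdvd k (f - g) -> pdvd k (f ^+ m - g ^+ m).
Proof. by rewrite subrXX; apply: pdvdMr. Qed.

Lemma pdvd_subXp k f g : (0 < p)%N -> (0 < k)%N ->
  pdvd k (f - g) -> pdvd k.+1 (f ^+ p - g ^+ p).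
Proof.
move=> p_gt0 k_gt0 dfg; rewrite subrXX -addn1; apply: pdvdM => //.
(* the cofactor is congruent to p g^(p-1) modulo f - g *)
have -> : \sum_(i < p) f ^+ (p.-1 - i) * g ^+ i =
    \sum_(i < p) (f ^+ (p.-1 - i) - g ^+ (p.-1 - i)) * g ^+ i + p%:R * g ^+ p.-1.
  rewrite mulr_natl -[p in _ *+ p]card_ord -sumr_const -big_split /=.
  apply: eq_bigr => i _; have le_ip : (i <= p.-1)%N by rewrite -ltnS prednK.
  by rewrite mulrBl -exprD subnK // subrK.
apply: pdvdD; last by exists (g ^+ p.-1); rewrite expr1.
by apply: pdvd_sum => i; apply/pdvdMr/pdvd_subXX/(pdvdW k_gt0).
Qed.

Lemma pdvd_subXpn k f g : (0 < p)%N ->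
  pdvd 1 (f - g) -> pdvd k.+1 (f ^+ (p ^ k) - g ^+ (p ^ k)).
Proof.
move=> p_gt0 dfg; elim: k => [|k IHk]; first by rewrite expn0 !expr1.
by rewrite expnSr !exprM; apply: pdvd_subXp.
Qed.

End PowerDivisibility.

Lemma pdvd_expDp (A : comPzRingType) p (f g : A) :
  prime p -> pdvd p 1 ((f + g) ^+ p - f ^+ p - g ^+ p).
Proof.
case: p => [//|q] q1_prime.
rewrite exprDn big_ord_recr big_ord_recl /= !subnn !subn0 !expr0 mulr1 mul1r.
rewrite bin0 binn !mulr1n [f ^+ _ + _]addrC addrAC addrK addrK.
apply: pdvd_sum => i.
have /dvdnP [m ->] : (q.+1 %| 'C(q.+1, bump 0 i))%N.
  by apply: prime_dvd_bin; rewrite // /bump /= add1n ltnS ltn_ord.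
by exists (f ^+ (q.+1 - bump 0 i) * g ^+ bump 0 i *+ m); rewrite mulrnA expr1 mulr_natl.
Qed.

Section FrobeniusLift.
Variables (A : comPzRingType) (p : nat) (phi : {rmorphism A -> A}).
Implicit Types f g : A.

Definition lifts_frob f : Prop := pdvd p 1 (phi f - f ^+ p).

Lemma lifts_frob1 : lifts_frob 1.
Proof. by rewrite /lifts_frob rmorph1 expr1n subrr; apply: pdvd0. Qed.

Lemma lifts_frobM f g : lifts_frob f -> lifts_frob g -> lifts_frob (f * g).
Proof.
move=> df dg; rewrite /lifts_frob rmorphM exprMn.
have -> : phi f * phi g - f ^+ p * g ^+ p =
    (phi f - f ^+ p) * phi g + f ^+ p * (phi g - g ^+ p).
  by move: (f ^+ p) (g ^+ p) => F G; ring. (* [ring] needs numeral exponents *)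
by apply: pdvdD; [apply: pdvdMr | apply: pdvdMl].
Qed.

Hypothesis p_prime : prime p.

Lemma lifts_frobD f g : lifts_frob f -> lifts_frob g -> lifts_frob (f + g).
Proof.
move=> df dg; rewrite /lifts_frob rmorphD.
have -> : phi f + phi g - (f + g) ^+ p =
    (phi f - f ^+ p) + (phi g - g ^+ p) - ((f + g) ^+ p - f ^+ p - g ^+ p).
  by move: ((f + g) ^+ p) (f ^+ p) (g ^+ p) => FG F G; ring.
by apply: pdvdB; [apply: pdvdD | apply: pdvd_expDp].
Qed.

Lemma lifts_frobB f g : lifts_frob f -> lifts_frob g -> lifts_frob (f - g).
Proof.
move=> df dg; rewrite /lifts_frob rmorphB.
have -> : phi f - phi g - (f - g) ^+ p =
    (phi f - f ^+ p) - (phi g - g ^+ p) + (f ^+ p - (f - g) ^+ p - g ^+ p).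
  by move: ((f - g) ^+ p) (f ^+ p) (g ^+ p) => FG F G; ring.
have := pdvd_expDp (f - g) g p_prime; rewrite subrK => dfg.
by apply: pdvdD => //; apply: pdvdB.
Qed.

Lemma lifts_frob_int (c : int) : lifts_frob c%:~R.
Proof.
have lifts_frob0 : lifts_frob 0.
  by rewrite -(subrr 1); apply: lifts_frobB; apply: lifts_frob1.
have lifts_frob_nat n : lifts_frob n%:R.
  by elim: n => // n IHn; rewrite mulrS; apply: lifts_frobD lifts_frob1 IHn.
case: c => n; first exact: lifts_frob_nat.
by rewrite NegzE mulrNz -sub0r; apply: lifts_frobB lifts_frob0 (lifts_frob_nat n.+1).
Qed.

End FrobeniusLift.

Section Ghost.
Variables (A : comPzRingType) (p : nat).
Implicit Types u v : nat -> A.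

Definition ghost u (i : nat) : A := \sum_(n < i.+1) p%:R ^+ n * u n ^+ (p ^ (i - n)).

Definition ghost_head u (i : nat) : A := \sum_(n < i) p%:R ^+ n * u n ^+ (p ^ (i - n)).

Definition ghost_image (x : nat -> A) : Prop := exists a, forall i, x i = ghost a i.

Lemma ghostE u i : ghost u i = ghost_head u i + p%:R ^+ i * u i.
Proof. by rewrite /ghost /ghost_head big_ord_recr /= subnn expn0 expr1. Qed.

Lemma eq_ghost u v i : (forall n, (n <= i)%N -> u n = v n) -> ghost u i = ghost v i.
Proof. by move=> uv; apply: eq_bigr => -[n /= le_ni] _; rewrite uv. Qed.

Lemma eq_ghost_head u v i :
  (forall n, (n < i)%N -> u n = v n) -> ghost_head u i = ghost_head v i.
Proof. by move=> uv; apply: eq_bigr => -[n /= lt_ni] _; rewrite uv. Qed.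

Lemma ghost0 i : (0 < p)%N -> ghost (fun _ => 0) i = 0.
Proof.
by move=> p_gt0; apply: big1 => n _; rewrite expr0n expn_eq0 eqn0Ngt p_gt0 mulr0.
Qed.

End Ghost.

Lemma rmorph_ghost (A B : comPzRingType) (f : {rmorphism A -> B}) p u i :
  f (ghost p u i) = ghost p (fun n => f (u n)) i.
Proof.
rewrite rmorph_sum; apply: eq_bigr => n _.
by rewrite rmorphM rmorphXn rmorph_nat rmorphXn.
Qed.

Section Dwork.
Variables (A : comPzRingType) (p : nat) (phi : {rmorphism A -> A}).
Hypotheses (p_gt0 : (0 < p)%N) (phi_lift : forall f, lifts_frob p phi f).

Lemma pdvd_lift_exp f k : pdvd p k.+1 (f ^+ (p ^ k.+1) - phi f ^+ (p ^ k)).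
Proof.
rewrite expnS exprM; apply: pdvd_subXpn => //.
by rewrite -opprB; apply/pdvdN/phi_lift.
Qed.

Lemma ghost_head_congr u i : pdvd p i.+1 (ghost_head p u i.+1 - phi (ghost p u i)).
Proof.
rewrite rmorph_ghost /ghost_head /ghost -sumrB.
apply: pdvd_sum => -[n /=]; rewrite ltnS => le_ni.
rewrite -mulrBr subSn // -[in X in pdvd _ X _](subnKC le_ni) -addnS.
by apply: pdvd_mulXn; apply: pdvd_lift_exp.
Qed.

Lemma ghost_congr u i : pdvd p i.+1 (ghost p u i.+1 - phi (ghost p u i)).
Proof.
rewrite ghostE addrAC; apply: pdvdD; first exact: ghost_head_congr.
by exists (u i.+1).
Qed.

Lemma dwork_trunc y : (forall i, pdvd p i.+1 (y i.+1 - phi (y i))) ->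
  forall M, exists c, forall i, (i < M)%N -> ghost p c i = y i.
Proof.
move=> y_congr; elim=> [|M [c cE]]; first by exists (fun _ => 0).
have [h hE] : pdvd p M (y M - ghost_head p c M).
  case: M cE => [|M] cE; first by exists (y 0 - ghost_head p c 0); rewrite mul1r.
  have -> : y M.+1 - ghost_head p c M.+1 =
      (y M.+1 - phi (y M)) - (ghost_head p c M.+1 - phi (ghost p c M)).
    by rewrite cE // opprB addrA subrK.
  by apply: pdvdB => //; apply: ghost_head_congr.
exists (fun j => if j == M then h else c j) => i; rewrite ltnS leq_eqVlt.
case/orP=> [/eqP ->|lt_iM].
  rewrite ghostE eqxx -hE (@eq_ghost_head _ p _ c) => [|n lt_nM].
    by rewrite addrC subrK.
  by rewrite (ltn_eqF lt_nM).
rewrite -cE //; apply: eq_ghost => n le_ni.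
by rewrite (ltn_eqF (leq_ltn_trans le_ni lt_iM)).
Qed.

End Dwork.

Section MpolyFrobenius.
Variables (k p : nat).

Definition mfrob : {rmorphism {mpoly int[k]} -> {mpoly int[k]}} :=
  mmap (@mpolyC k int) (fun i => 'X_i ^+ p).

Lemma mfrobX i : mfrob 'X_i = 'X_i ^+ p.
Proof. by rewrite /mfrob /= mmapX mmap1U. Qed.

Lemma mfrob_lifts : prime p -> forall F, lifts_frob p mfrob F.
Proof.
move=> p_prime F.
have lifts_X i n : lifts_frob p mfrob ('X_i ^+ n).
  elim: n => [|n IHn]; first exact: lifts_frob1.
  rewrite exprS; apply: lifts_frobM IHn.
  by rewrite /lifts_frob mfrobX subrr; apply: pdvd0.
elim/mpolyind: F => [|c m q _ _ lifts_q]; first exact: (lifts_frob_int _ p_prime 0).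
rewrite -mul_mpolyC -[c in c%:MP]intz rmorph_int.
apply: (lifts_frobD p_prime) lifts_q.
apply: lifts_frobM; first exact: lifts_frob_int.
rewrite mpolyXE_id; apply: (big_ind (lifts_frob p mfrob)) => [||i _]; last exact: lifts_X.
  exact: lifts_frob1.
exact: lifts_frobM.
Qed.

End MpolyFrobenius.

(* [mmap] only evaluates into nontrivial rings. *)
Definition nonzero_ring (R : comPzRingType) of (1 : R) != 0 : Type := R.
HB.instance Definition _ R nz1 := GRing.ComPzRing.on (@nonzero_ring R nz1).
HB.instance Definition _ R nz1 :=
  GRing.PzSemiRing_isNonZero.Build (@nonzero_ring R nz1) nz1.

Section GhostSubtraction.
Variable p : nat.
Hypothesis p_prime : prime p.

Lemma ghost_sub_trunc_nz (R : comNzRingType) (a b : nat -> R) N :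
  exists c, forall i, (i < N)%N -> ghost p c i = ghost p a i - ghost p b i.
Proof.
pose k := (N + N).+1.
pose xa n : {mpoly int[k]} := 'X_(inord n).
pose xb n : {mpoly int[k]} := 'X_(inord (N + n)).
pose y i := ghost p xa i - ghost p xb i.
have y_congr i : pdvd p i.+1 (y i.+1 - mfrob k p (y i)).
  have -> : y i.+1 - mfrob k p (y i) =
      (ghost p xa i.+1 - mfrob k p (ghost p xa i))
      - (ghost p xb i.+1 - mfrob k p (ghost p xb i)).
    by rewrite /y rmorphB !opprD !opprK addrACA.
  have congr := ghost_congr (prime_gt0 p_prime) (mfrob_lifts (k := k) p_prime).
  exact: pdvdB (congr xa i) (congr xb i).
have [c cE] :=
  dwork_trunc (prime_gt0 p_prime) (mfrob_lifts (k := k) p_prime) y_congr N.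
pose h (j : 'I_k) : R := if (j < N)%N then a j else b (j - N)%N.
pose ev : {rmorphism {mpoly int[k]} -> R} := mmap intr h.
exists (fun n => ev (c n)) => i lt_iN.
transitivity (ev (ghost p c i)); first exact: esym (rmorph_ghost ev p c i).
rewrite cE // rmorphB; congr (_ - _).
  apply: etrans (rmorph_ghost ev p xa i) _; apply: eq_ghost => n le_ni.
  have lt_nN := leq_ltn_trans le_ni lt_iN.
  have lt_nk : (n < k)%N by rewrite ltnS (leq_trans (ltnW lt_nN)) ?leq_addr.
  by rewrite /ev /xa /= mmapX mmap1U /h inordK // lt_nN.
apply: etrans (rmorph_ghost ev p xb i) _; apply: eq_ghost => n le_ni.
have lt_Nnk : (N + n < k)%N by rewrite ltnS leq_add2l ltnW // (leq_ltn_trans le_ni).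
by rewrite /ev /xb /= mmapX mmap1U /h inordK // ltnNge leq_addr /= addKn.
Qed.

Lemma ghost_sub_trunc (R : comPzRingType) (a b : nat -> R) N :
  exists c, forall i, (i < N)%N -> ghost p c i = ghost p a i - ghost p b i.
Proof.
have [R_triv | nz1] := eqVneq (1 : R) 0.
  have all0 (x : R) : x = 0 by rewrite -[x]mulr1 R_triv mulr0.
  by exists a => i _; rewrite [LHS]all0 [RHS]all0.
exact: (@ghost_sub_trunc_nz (nonzero_ring nz1)).
Qed.

End GhostSubtraction.

Section GhostImage.
Variables (p : nat) (R : comPzRingType).
Implicit Types a b : nat -> R.

Lemma eq_mul_expr (c u v : R) m : c * u = c * v -> c * u ^+ m = c * v ^+ m.
Proof.
by move=> cuv; apply/eqP; rewrite -subr_eq0 -mulrBr subrXX mulrA mulrBr cuv subrr mul0r.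
Qed.

Lemma ghost_trunc_inj a b N : (forall i, (i < N)%N -> ghost p a i = ghost p b i) ->
  forall n, (n < N)%N -> p%:R ^+ n * a n = p%:R ^+ n * b n.
Proof.
elim: N => [//|N IHN] ab n; have {}IHN := IHN (fun i lt_iN => ab i (ltnW lt_iN)).
rewrite ltnS leq_eqVlt => /orP [/eqP ->|]; last exact: IHN.
have := ab N (ltnSn N); rewrite !ghostE.
have -> : ghost_head p a N = ghost_head p b N.
  by apply: eq_bigr => -[m /= lt_mN] _; apply/eq_mul_expr/IHN.
exact: addrI.
Qed.

Lemma ghost_image_closed : prod_closed (ghost_image p (A := R)).
Proof.
move=> x near_x.
have [b xE] : exists b : nat -> nat -> R,
    forall n i, (i <= n)%N -> x i = ghost p (b n) i.
  have near n : exists b, forall i, (i <= n)%N -> x i = ghost p b i.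
    by have [s [b sE] sx] := near_x n.+1; exists b => i le_in; rewrite -sx // sE.
  exists (fun n => proj1_sig (constructive_indefinite_description _ (near n))).
  move=> n; exact: proj2_sig (constructive_indefinite_description _ (near n)).
exists (fun n => b n n) => i; rewrite (xE i i (leqnn i)).
apply: eq_bigr => -[n /= le_ni] _.
apply: eq_mul_expr; apply: (@ghost_trunc_inj _ _ n.+1) => // j le_jn.
by rewrite -(xE i j (leq_trans le_jn le_ni)) -(xE n j le_jn).
Qed.

Lemma ghost_image_subgroup : prime p -> add_subgroup (ghost_image p (A := R)).
Proof.
move=> p_prime; split; first by exists (fun _ => 0) => i; rewrite ghost0 ?prime_gt0.
move=> y z [a yE] [b zE]; apply: ghost_image_closed => N.
have [c cE] := ghost_sub_trunc p_prime a b N.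
by exists (ghost p c); [exists c | move=> i lt_iN; rewrite cE // yE zE].
Qed.

Lemma iter_Vop (f : nat -> R) n i :
  iter n (@Vop p R) f i = if (n <= i)%N then p%:R ^+ n * f (i - n)%N else 0.
Proof.
elim: n i => [|n IHn] [|i] //=; rewrite ?expr0 ?mul1r ?subn0 // IHn subSS ltnS.
by case: (n <= i)%N; rewrite ?mulr0 // exprS mulrA.
Qed.

Lemma sum_Vteich a N i : (i < N)%N ->
  \sum_(n < N) iter n (@Vop p R) (teich p (a n)) i = ghost p a i.
Proof.
move=> lt_iN; under eq_bigr do rewrite iter_Vop.
rewrite -big_mkcond /= /ghost.
by rewrite (big_ord_widen N (fun n => p%:R ^+ n * a n ^+ (p ^ (i - n))%N)).
Qed.

Lemma ghost_image_Vteich n (r : R) : (0 < p)%N ->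
  ghost_image p (iter n (@Vop p R) (teich p r)).
Proof.
move=> p_gt0; exists (fun m => if m == n then r else 0) => i.
have zeroX m : (0 : R) ^+ (p ^ m) = 0 by rewrite expr0n expn_eq0 eqn0Ngt p_gt0.
rewrite iter_Vop /ghost; case: leqP => [le_ni | lt_in].
  rewrite (bigD1 (Ordinal (le_ni : (n < i.+1)%N))) //= eqxx big1 ?addr0 // => j ne_jn.
  have /negbTE -> : (j : nat) != n by apply: contra ne_jn => /eqP jn; apply/eqP/val_inj.
  by rewrite zeroX mulr0.
apply/esym/big1 => j _.
by rewrite (ltn_eqF (leq_ltn_trans (ltn_ord j : (j <= i)%N) lt_in)) zeroX mulr0.
Qed.

Lemma X_sub_ghost_image (x : nat -> R) : prime p -> X p x -> ghost_image p x.
Proof.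
move=> p_prime; apply.
- exact: ghost_image_subgroup.
- exact: ghost_image_closed.
- by move=> n r; apply/ghost_image_Vteich/prime_gt0.
Qed.

Lemma series_to_ghost a x : (forall i, x i = ghost p a i) ->
  series_to (fun n => iter n (@Vop p R) (teich p (a n))) x.
Proof. by move=> xE i; exists i.+1 => N lt_iN; rewrite sum_Vteich // xE. Qed.

End GhostImage.

Theorem lemma2p6 (p : nat) (hp : prime p) (R : comPzRingType) (x : nat -> R) :
  @X p R x ->
  exists a : nat -> R, @series_to R (fun n => iter n (@Vop p R) (@teich p R (a n))) x.
Proof.
move=> /(X_sub_ghost_image hp) [a xE].
by exists a; apply: series_to_ghost.
Qed.
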